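(* Let $n>0$ be an integer and $S\subseteq\mathbb{N}^{\mathbb{N}}$. Suppose $S=\bigcup_{i\in\mathbb{N}}\bigcap_{j\in\mathbb{N}}X_{ij}=\bigcap_{i\in\mathbb{N}}\bigcup_{j\in\mathbb{N}}Y_{ij}$, where all $X_{ij}$ and $Y_{ij}$ are $\mathbf{\Delta}^0_n$ subsets of $\mathbb{N}^{\mathbb{N}}$. Then there is a single family $(Z_{ij})_{i,j\in\mathbb{N}}$ of $\mathbf{\Delta}^0_n$ sets such that $S=\bigcup_{i\in\mathbb{N}}\bigcap_{j\in\mathbb{N}}Z_{ij}=\bigcap_{i\in\mathbb{N}}\bigcup_{j\in\mathbb{N}}Z_{ij}$.
   Context: Baire space $\mathbb{N}^{\mathbb{N}}$ carries the product of discrete topologies; $\mathbf{\Delta}^0_n$ denotes the boldface Borel pointclass (sets that are both $\mathbf{\Sigma}^0_n$ and $\mathbf{\Pi}^0_n$). *)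

From Stdlib Require Import Arith.

Definition Baire := nat -> nat.

Definition bset := Baire -> Prop.

Definition bcompl (A : bset) : bset := fun x => ~ A x.

(* Open sets in the product of discrete topologies: every point of A has a
   basic neighbourhood (all sequences sharing its first m entries) inside A. *)
Definition bopen (A : bset) : Prop :=
  forall x, A x -> exists m, forall y, (forall k, k < m -> y k = x k) -> A y.

(* Sigma n A  <->  A is boldface Sigma^0_n  (n >= 1);  level 0 is empty.
   Sigma^0_1 = open; Sigma^0_{m+1} = countable unions of Pi^0_m sets,
   where Pi^0_m = complements of Sigma^0_m sets. *)
Fixpoint Sigma (n : nat) (A : bset) : Prop :=
  match n with
  | 0 => False
  | S m =>
      match m with
      | 0 => bopen A
      | S _ => exists B : nat -> bset,
                 (forall k, Sigma m (bcompl (B k))) /\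
                 (forall x, A x <-> exists k, B k x)
      end
  end.

Definition Pi (n : nat) (A : bset) : Prop := Sigma n (bcompl A).

Definition Delta (n : nat) (A : bset) : Prop := Sigma n A /\ Pi n A.

(* The set S is the pointwise limit of a sequence (G j) of Delta^0_n sets:
   at stage j declare x in S when some index a <= j satisfies X a k x for all
   k <= j and, for every b <= a, Y b k x holds for some k <= j.  Each G j is a
   finite Boolean combination of the X's and Y's, hence Delta^0_n.  If x is in
   S, the index a of a true row of X wins from some stage on; if not, some row
   b of Y is empty and every a <= b eventually fails its X-row, so G j x
   eventually fails.  A pointwise convergent sequence satisfies
   lim_i inf_j G (i + j) = lim_i sup_j G (i + j) = its limit, so
   Z i j := G (i + j) works. *)
From Stdlib Require Import Arith Classical Lia Cantor.

Definition bunion (A B : bset) : bset := fun x => A x \/ B x.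
Definition binter (A B : bset) : bset := fun x => A x /\ B x.

Lemma Sigma_ext n (A A' : bset) :
  Sigma n A -> (forall x, A x <-> A' x) -> Sigma n A'.
Proof.
  destruct n as [|[|m]]; simpl; auto.
  - intros HA E x Hx. apply E in Hx. destruct (HA x Hx) as [k Hk].
    exists k. intros y Hy. apply E. auto.
  - intros [B [HB HE]] E. exists B. split; auto.
    intro x. rewrite <- E. auto.
Qed.

Lemma bopen_union (A B : bset) : bopen A -> bopen B -> bopen (bunion A B).
Proof.
  intros HA HB x [Hx|Hx].
  - destruct (HA x Hx) as [k Hk]. exists k. intros y Hy. left; auto.
  - destruct (HB x Hx) as [k Hk]. exists k. intros y Hy. right; auto.
Qed.

Lemma bopen_inter (A B : bset) : bopen A -> bopen B -> bopen (binter A B).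
Proof.
  intros HA HB x [Hx Hx'].
  destruct (HA x Hx) as [k Hk]. destruct (HB x Hx') as [k' Hk'].
  exists (max k k'). intros y Hy. split.
  - apply Hk. intros i Hi. apply Hy. lia.
  - apply Hk'. intros i Hi. apply Hy. lia.
Qed.

(* Union and intersection must be proved together: the Pi^0_m sets building a
   Sigma^0_(m+1) intersection are unions of complements of Sigma^0_m sets. *)
Lemma Sigma_union_inter n :
  (forall A B, Sigma n A -> Sigma n B -> Sigma n (bunion A B)) /\
  (forall A B, Sigma n A -> Sigma n B -> Sigma n (binter A B)).
Proof.
  induction n as [|[|m] [IHU IHI]].
  - simpl; tauto.
  - split; [apply bopen_union | apply bopen_inter].
  - split.
    + intros A B [BA [HA EA]] [BB [HB EB]].
      exists (fun k => if Nat.eqb (fst (of_nat k)) 0 then BA (snd (of_nat k))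
                       else BB (snd (of_nat k))).
      split.
      * intro k. destruct (Nat.eqb _ 0); auto.
      * intro x. unfold bunion. rewrite EA, EB. split.
        -- intros [[k Hk]|[k Hk]].
           ++ exists (to_nat (0, k)). rewrite cancel_of_to. auto.
           ++ exists (to_nat (1, k)). rewrite cancel_of_to. auto.
        -- intros [k Hk]. destruct (Nat.eqb _ 0); eauto.
    + intros A B [BA [HA EA]] [BB [HB EB]].
      exists (fun k => binter (BA (fst (of_nat k))) (BB (snd (of_nat k)))).
      split.
      * intro k. eapply Sigma_ext.
        { apply IHU; [apply (HA (fst (of_nat k))) | apply (HB (snd (of_nat k)))]. }
        intro x. unfold bunion, binter, bcompl. tauto.
      * intro x. unfold binter. rewrite EA, EB. split.
        -- intros [[k Hk] [k' Hk']]. exists (to_nat (k, k')).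
           rewrite cancel_of_to. auto.
        -- intros [k [H1 H2]]. eauto.
Qed.

Lemma Delta_ext n (A A' : bset) :
  Delta n A -> (forall x, A x <-> A' x) -> Delta n A'.
Proof.
  intros [HS HP] E. split.
  - exact (Sigma_ext n A A' HS E).
  - apply (Sigma_ext n (bcompl A) (bcompl A') HP).
    intro x. unfold bcompl. rewrite E. tauto.
Qed.

Lemma Delta_compl n (A : bset) : Delta n A -> Delta n (bcompl A).
Proof.
  intros [HS HP]. split; auto.
  eapply Sigma_ext; [exact HS|]. intro x. unfold bcompl. tauto.
Qed.

Lemma Delta_union n (A B : bset) : Delta n A -> Delta n B -> Delta n (bunion A B).
Proof.
  intros [HSA HPA] [HSB HPB]. split.
  - apply Sigma_union_inter; auto.
  - eapply Sigma_ext; [apply (proj2 (Sigma_union_inter n)); [exact HPA | exact HPB]|].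
    intro x. unfold bcompl, binter, bunion. tauto.
Qed.

Lemma Delta_inter n (A B : bset) : Delta n A -> Delta n B -> Delta n (binter A B).
Proof.
  intros [HSA HPA] [HSB HPB]. split.
  - apply Sigma_union_inter; auto.
  - eapply Sigma_ext; [apply (proj1 (Sigma_union_inter n)); [exact HPA | exact HPB]|].
    intro x. unfold bcompl, binter, bunion. tauto.
Qed.

Lemma Delta_bounded_ex n (F : nat -> bset) (HF : forall k, Delta n (F k)) j :
  Delta n (fun x => exists k, k <= j /\ F k x).
Proof.
  induction j as [|j IHj].
  - eapply Delta_ext; [apply (HF 0)|]. intro x. split.
    + intro H. exists 0. auto.
    + intros [k [Hk H]]. replace k with 0 in H by lia. exact H.
  - eapply Delta_ext; [apply (Delta_union _ _ _ IHj (HF (S j)))|].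
    intro x. unfold bunion. split.
    + intros [[k [Hk H]]|H]; [exists k | exists (S j)]; split; auto; lia.
    + intros [k [Hk H]]. destruct (Nat.eq_dec k (S j)) as [->|Hne]; auto.
      left. exists k. split; auto; lia.
Qed.

Lemma Delta_bounded_all n (F : nat -> bset) (HF : forall k, Delta n (F k)) j :
  Delta n (fun x => forall k, k <= j -> F k x).
Proof.
  eapply Delta_ext.
  - apply Delta_compl, (Delta_bounded_ex n (fun k => bcompl (F k))).
    intro k. apply Delta_compl, HF.
  - intro x. unfold bcompl. split.
    + intros H k Hk. apply NNPP. intro H'. apply H. eauto.
    + intros H [k [Hk H']]. auto.
Qed.

Lemma bounded_choice (P : nat -> nat -> Prop) a :
  (forall b, b <= a -> exists k, P b k) ->
  exists K, forall b, b <= a -> exists k, k <= K /\ P b k.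
Proof.
  induction a as [|a IHa]; intro H.
  - destruct (H 0 (le_n 0)) as [k Hk]. exists k. intros b Hb.
    replace b with 0 by lia. eauto.
  - destruct IHa as [K HK]; [intros b Hb; apply H; lia|].
    destruct (H (S a) (le_n _)) as [k Hk]. exists (max K k). intros b Hb.
    destruct (Nat.eq_dec b (S a)) as [->|Hne].
    + exists k. split; auto; lia.
    + destruct (HK b ltac:(lia)) as [k' [Hk' Hp]]. exists k'. split; auto; lia.
Qed.

Definition eventually_equal (G : nat -> bset) (S : bset) : Prop :=
  forall x, exists N, forall m, N <= m -> (G m x <-> S x).

Lemma liminf_of_eventually_equal (G : nat -> bset) (S : bset) :
  eventually_equal G S -> forall x, S x <-> exists i, forall j, G (i + j) x.
Proof.
  intros HG x. destruct (HG x) as [N HN]. split.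
  - intro Hx. exists N. intro j. apply HN; [lia | exact Hx].
  - intros [i Hi]. apply (HN (i + N)); [lia | apply Hi].
Qed.

Lemma limsup_of_eventually_equal (G : nat -> bset) (S : bset) :
  eventually_equal G S -> forall x, S x <-> forall i, exists j, G (i + j) x.
Proof.
  intros HG x. destruct (HG x) as [N HN]. split.
  - intros Hx i. exists N. apply HN; [lia | exact Hx].
  - intro H. destruct (H N) as [j Hj]. apply (HN (N + j)); [lia | exact Hj].
Qed.

Section Delta2Approximation.

Variables (S : bset) (X Y : nat -> nat -> bset).
Hypothesis hSX : forall x, S x <-> exists i, forall j, X i j x.
Hypothesis hSY : forall x, S x <-> forall i, exists j, Y i j x.

Definition stage (j : nat) : bset := fun x =>
  exists a, a <= j /\ (forall k, k <= j -> X a k x) /\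
            forall b, b <= a -> exists k, k <= j /\ Y b k x.

Lemma Delta_stage n :
  (forall i j, Delta n (X i j)) -> (forall i j, Delta n (Y i j)) ->
  forall j, Delta n (stage j).
Proof.
  intros hX hY j.
  apply (Delta_bounded_ex n (fun a => binter (fun x => forall k, k <= j -> X a k x)
           (fun x => forall b, b <= a -> exists k, k <= j /\ Y b k x))).
  intro a. apply Delta_inter.
  - apply Delta_bounded_all. auto.
  - apply (Delta_bounded_all n (fun b x => exists k, k <= j /\ Y b k x)).
    intro b. apply Delta_bounded_ex. auto.
Qed.

Lemma stage_eventually_in x : S x -> exists N, forall m, N <= m -> stage m x.
Proof.
  intro Hx. destruct (proj1 (hSX x) Hx) as [a HXa].
  destruct (bounded_choice (fun b k => Y b k x) a) as [K HK].
  { intros b _. apply hSY. exact Hx. }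
  exists (max a K). intros m Hm. exists a. repeat split; [lia | auto |].
  intros b Hb. destruct (HK b Hb) as [k [Hk HY]]. exists k. split; [lia | exact HY].
Qed.

Lemma stage_eventually_out x : ~ S x -> exists N, forall m, N <= m -> ~ stage m x.
Proof.
  intro Hx.
  assert (Hempty : exists b, forall k, ~ Y b k x).
  { apply NNPP. intro H. apply Hx, hSY. intro i. apply NNPP. intro Hi.
    apply H. exists i. intros k Hk. apply Hi. eauto. }
  destruct Hempty as [b0 Hb0].
  destruct (bounded_choice (fun a k => ~ X a k x) b0) as [K HK].
  { intros a _. apply NNPP. intro H. apply Hx, hSX. exists a.
    intro j. apply NNPP. intro Hj. apply H. eauto. }
  exists K. intros m Hm [a [Ha [HXa HYa]]].
  destruct (le_lt_dec a b0) as [Hab | Hba].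
  - destruct (HK a Hab) as [k [Hk HnX]]. apply HnX, HXa. lia.
  - destruct (HYa b0 ltac:(lia)) as [k [_ HY]]. exact (Hb0 k HY).
Qed.

Lemma stage_eventually_equal : eventually_equal stage S.
Proof.
  intro x. destruct (classic (S x)) as [Hx | Hx].
  - destruct (stage_eventually_in x Hx) as [N HN]. exists N. intros m Hm. split; auto.
  - destruct (stage_eventually_out x Hx) as [N HN]. exists N.
    intros m Hm. split; [intro H; destruct (HN m Hm H) | contradiction].
Qed.

End Delta2Approximation.

Theorem mainTheorem12 (n : nat) (hn : 0 < n) (S : bset)
  (X Y : nat -> nat -> bset)
  (hX : forall i j, Delta n (X i j)) (hY : forall i j, Delta n (Y i j))
  (hSX : forall x, S x <-> exists i, forall j, X i j x)
  (hSY : forall x, S x <-> forall i, exists j, Y i j x) :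
  exists Z : nat -> nat -> bset,
    (forall i j, Delta n (Z i j)) /\
    (forall x, S x <-> exists i, forall j, Z i j x) /\
    (forall x, S x <-> forall i, exists j, Z i j x).
Proof.
  pose proof (stage_eventually_equal S X Y hSX hSY) as Hlim.
  exists (fun i j => stage X Y (i + j)). split; [|split].
  - intros i j. apply Delta_stage; assumption.
  - exact (liminf_of_eventually_equal _ _ Hlim).
  - exact (limsup_of_eventually_equal _ _ Hlim).
Qed.
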